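(* Let $M\ge1$. There is an element-based generator $\mathds{G}$ (which may use $M$) such that, for any countable collection $\mathcal{L}$, target language $K\in\mathcal{L}$, and error parameter $\varepsilon\in(0,1)$ given to it, on any enumeration $x_{1:\infty}$ of $K$ with $o(1)$-noise rate and arbitrary omissions that is an $M$-bounded displacement enumeration with respect to $K$, the output $w_{1:\infty}$ of $\mathds{G}$ satisfies $\mu_{\rm low}(\{w_1,w_2,\dots\},K)\ge\frac{1-\varepsilon}{2M}$.
   Context: The universe is $U=\mathbb{N}$ with its natural order; a language is an infinite subset of $U$ with canonical enumeration $\ell_1<\ell_2<\cdots$; a collection is a countable family of languages. For $A,B\subseteq\mathbb{N}$ with $B=\{b_1<b_2<\cdots\}$, $\mu_{\rm low}(A,B)=\liminf_n\frac1n|A\cap\{b_1,\dots,b_n\}|$. For $x\in U$, $\sigma(x,L)=j$ if $x=\ell_j$ and $0$ if $x\notin L$; $x_{1:\infty}$ is an $M$-bounded displacement enumeration with respect to $L$ if there is $n^\star$ with $\sigma(x_n,L)\le Mn$ for all $n\ge n^\star$. An enumeration of $K$ with $o(1)$-noise and arbitrary omissions is a sequence of distinct elements listing each element of some infinite $\hat K\subseteq K$ exactly once, with $\frac1n|\{t\le n:x_t\notin\hat K\}|\to0$. An element-based generator outputs, from $x_1,\dots,x_n$ and knowledge of $\mathcal{L}$ (not $K$), an element $w_n\notin\{x_1,\dots,x_n,w_1,\dots,w_{n-1}\}$. *)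

From Stdlib Require Import Reals List ClassicalEpsilon.
From Coquelicot Require Import Coquelicot.
Open Scope R_scope.

Definition infinite_set (A : nat -> bool) : Prop :=
  forall N : nat, exists y : nat, (N <= y)%nat /\ A y = true.

Fixpoint cnt (A : nat -> bool) (n : nat) : nat :=
  match n with
  | O => O
  | S m => (cnt A m + (if A m then 1 else 0))%nat
  end.

Fixpoint cntP (P : nat -> Prop) (n : nat) : nat :=
  match n with
  | O => O
  | S m => (cntP P m + (if excluded_middle_informative (P m) then 1 else 0))%nat
  end.

(* sigma(x, L) = j if x = l_j (1-indexed canonical enumeration), 0 if x ∉ L *)
Definition sigma (x : nat) (L : nat -> bool) : nat :=
  if L x then S (cnt L x) else O.

(* kth B j = b_{j+1}, the (j+1)-th smallest element of B (0-indexed);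
   well defined (meaningful) when B is infinite. *)
Definition kth (B : nat -> bool) (j : nat) : nat :=
  epsilon (inhabits 0%nat) (fun y => B y = true /\ cnt B y = j).

Definition mu_low (A : nat -> Prop) (B : nat -> bool) : Rbar :=
  LimInf_seq (fun n => INR (cntP (fun j => A (kth B j)) n) / INR n).

(* Sequences are 0-indexed: x t stands for x_{t+1}. *)
Definition prefix (x : nat -> nat) (n : nat) : list nat := map x (seq 0 n).

Definition bounded_displacement (M : R) (x : nat -> nat) (L : nat -> bool) : Prop :=
  exists nstar : nat, forall t : nat, (nstar <= S t)%nat ->
    INR (sigma (x t) L) <= M * INR (S t).

Definition noisy_enumeration (x : nat -> nat) (K : nat -> bool) : Prop :=
  (forall s t : nat, x s = x t -> s = t) /\
  exists Khat : nat -> bool,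
    (forall y, Khat y = true -> K y = true) /\
    infinite_set Khat /\
    (forall y, Khat y = true -> exists t, x t = y) /\
    is_lim_seq (fun n => INR (cntP (fun t => Khat (x t) = false) n) / INR n) 0.

(* An element-based generator: given the collection L, the error parameter eps
   and the prefix x_1..x_n, outputs w_n.  Validity: w_n is not among
   x_1..x_n, w_1..w_{n-1}. *)
Definition generator := (nat -> nat -> bool) -> R -> list nat -> nat.

Definition gen_output (G : generator) (L : nat -> nat -> bool) (eps : R)
  (x : nat -> nat) (t : nat) : nat := G L eps (prefix x (S t)).

Definition valid_generator (G : generator) : Prop :=
  forall (L : nat -> nat -> bool) (eps : R) (x : nat -> nat) (t : nat),
    ~ In (gen_output G L eps x t) (prefix x (S t)) /\
    forall s : nat, (s < t)%nat -> gen_output G L eps x s <> gen_output G L eps x t.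

From Pilot Require Import Defs.
From Stdlib Require Import Reals List.
From Coquelicot Require Import Coquelicot.
From Stdlib Require Import Lia Lra Psatz Classical ClassicalEpsilon Wf_nat.
Import ListNotations.
Open Scope R_scope.

(* The generator trusts language [L i] after n examples once its number of
   mistakes (examples outside [L i]) satisfies (mistakes + 1) D 2^(i+1) <= n,
   where D >= 1/eps, and it outputs the least unseen element lying in every
   trusted language.  A trusted language errs on at most a 2^-(i+1)/D
   fraction of the steps, so summing over i, the next example falls outside
   this consensus at most eps n times.  The noise has density zero, so the
   target K is eventually trusted and every consensus element then lies in K.
   At a step where the next example x_(n+1) lies in K and in the consensus,
   either x_(n+1) has already been output, or the output w_n is an element of
   K below x_(n+1); either way we find an output of rank at most
   rank(x_(n+1)) <= M (n+1), and each output is found at most twice (as some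
   w_n and as some x_(n+1)).  Hence about (1 - eps) m / (2M) of the first m
   elements of K are outputs. *)

Section Counting.
Local Open Scope nat_scope.

Lemma cntP_true n : cntP (fun _ => True) n = n.
Proof.
  induction n as [|n IH]; simpl; [reflexivity|].
  destruct excluded_middle_informative; tauto || lia.
Qed.

Lemma cntP_le_mono (P Q : nat -> Prop) n :
  (forall j, j < n -> P j -> Q j) -> cntP P n <= cntP Q n.
Proof.
  induction n as [|n IH]; intros HPQ; simpl; [lia|].
  specialize (IH (fun j Hj => HPQ j (Nat.lt_lt_succ_r _ _ Hj))).
  destruct (excluded_middle_informative (P n)) as [Pn|_],
    (excluded_middle_informative (Q n)) as [_|nQn]; try lia.
  exfalso; auto.
Qed.

Lemma cntP_or (P Q : nat -> Prop) n :
  cntP (fun j => P j \/ Q j) n <= cntP P n + cntP Q n.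
Proof.
  induction n as [|n IH]; simpl; [lia|].
  do 3 destruct excluded_middle_informative; tauto || lia.
Qed.

Lemma In_filter_seq (P : nat -> Prop) n j :
  In j (filter (fun j => if excluded_middle_informative (P j) then true else false) (seq 0 n))
  <-> j < n /\ P j.
Proof.
  rewrite filter_In, in_seq.
  destruct excluded_middle_informative; intuition (try lia; try discriminate).
Qed.

Lemma cntP_filter (P : nat -> Prop) n :
  cntP P n =
  length (filter (fun j => if excluded_middle_informative (P j) then true else false) (seq 0 n)).
Proof.
  induction n as [|n IH]; [reflexivity|].
  rewrite seq_S, filter_app, length_app, <- IH; simpl.
  destruct excluded_middle_informative; simpl; lia.
Qed.

Lemma cntP_le_inj (P Q : nat -> Prop) (f : nat -> nat) n m :
  (forall j, j < n -> P j -> f j < m /\ Q (f j)) ->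
  (forall i j, i < n -> j < n -> P i -> P j -> f i = f j -> i = j) ->
  cntP P n <= cntP Q m.
Proof.
  intros Hmaps Hinj. rewrite !cntP_filter, <- (length_map f).
  apply NoDup_incl_length.
  - apply NoDup_map_NoDup_ForallPairs; [|apply NoDup_filter, seq_NoDup].
    intros i j Hi Hj. apply In_filter_seq in Hi as [Hi Pi], Hj as [Hj Pj]. auto.
  - intros y Hy. apply in_map_iff in Hy as [j [<- Hj]].
    apply In_filter_seq in Hj as [Hj Pj]. apply In_filter_seq. auto.
Qed.

Lemma cntP_shift (P : nat -> Prop) n : cntP (fun t => P (S t)) n <= cntP P (S n).
Proof.
  apply cntP_le_inj with (f := S).
  - intros j Hj Pj. split; [lia|exact Pj].
  - intros i j _ _ _ _ Heq. lia.
Qed.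

Lemma cntP_lt_le k n : cntP (fun t => t < k) n <= k.
Proof.
  transitivity (cntP (fun _ => True) k); [|rewrite cntP_true; lia].
  apply cntP_le_inj with (f := fun t => t); auto.
Qed.

Lemma cntP_exists_le_sum (E : nat -> nat -> Prop) N n :
  cntP (fun s => exists i, i < N /\ E i s) n <= list_sum (map (fun i => cntP (E i) n) (seq 0 N)).
Proof.
  induction N as [|N IH].
  - simpl. induction n as [|n IHn]; simpl; [lia|].
    destruct excluded_middle_informative as [[i [Hi _]]|_]; lia.
  - rewrite seq_S, map_app, list_sum_app; simpl.
    etransitivity; [apply cntP_le_mono with (Q := fun s => (exists i, i < N /\ E i s) \/ E N s)|].
    { intros s _ [i [Hi Ei]].
      destruct (Nat.eq_dec i N) as [->|Hne]; [right; exact Ei|].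
      left. exists i. split; [lia|exact Ei]. }
    pose proof (cntP_or (fun s => exists i, i < N /\ E i s) (E N) n). lia.
Qed.

Lemma dyadic_sum_le (a : nat -> nat) D T n :
  (forall i, i < n -> a i * (D * 2 ^ S i) <= T) ->
  list_sum (map a (seq 0 n)) * D <= T.
Proof.
  intros Ha.
  assert (Hinv : list_sum (map a (seq 0 n)) * D * 2 ^ n + T <= 2 ^ n * T).
  { induction n as [|n IH]; [simpl; lia|].
    rewrite seq_S, map_app, list_sum_app. simpl.
    specialize (IH (fun i Hi => Ha i ltac:(lia))). specialize (Ha n ltac:(lia)).
    rewrite Nat.pow_succ_r' in Ha. nia. }
  pose proof (Nat.pow_nonzero 2 n ltac:(lia)).
  set (s := list_sum (map a (seq 0 n)) * D) in *. nia.
Qed.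

Lemma cnt_le_mono A a b : a <= b -> cnt A a <= cnt A b.
Proof. induction 1; simpl; lia. Qed.

Lemma cnt_inj A a b : A a = true -> A b = true -> cnt A a = cnt A b -> a = b.
Proof.
  assert (Hlt : forall u v, A u = true -> u < v -> cnt A u < cnt A v).
  { intros u v Hu Huv. pose proof (cnt_le_mono A (S u) v Huv) as H.
    simpl in H. rewrite Hu in H. lia. }
  intros Ha Hb Heq. destruct (Nat.lt_trichotomy a b) as [H|[H|H]]; auto.
  - apply (Hlt a b Ha) in H. lia.
  - apply (Hlt b a Hb) in H. lia.
Qed.

Lemma kth_cnt B v : B v = true -> kth B (cnt B v) = v.
Proof.
  intros Hv. unfold kth.
  destruct (epsilon_spec (inhabits 0) (fun y => B y = true /\ cnt B y = cnt B v)) as [Hy Hcnt];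
    [eauto|].
  exact (cnt_inj B _ _ Hy Hv Hcnt).
Qed.

End Counting.

Definition mistakes (L : nat -> nat -> bool) (p : list nat) (i : nat) : nat :=
  length (filter (fun y => negb (L i y)) p).

Definition candidate (D : nat) (L : nat -> nat -> bool) (p : list nat) (i : nat) : Prop :=
  ((mistakes L p i + 1) * D * 2 ^ S i <= length p)%nat.

Definition consensus (D : nat) (L : nat -> nat -> bool) (p : list nat) (y : nat) : Prop :=
  forall i, (i < length p)%nat -> candidate D L p i -> L i y = true.

Definition output_spec (D : nat) (L : nat -> nat -> bool) (p used : list nat) (y : nat) : Prop :=
  ~ In y (p ++ used) /\
  forall z, consensus D L p z -> ~ In z (p ++ used) -> consensus D L p y /\ (y <= z)%nat.

Definition choose (D : nat) (L : nat -> nat -> bool) (p used : list nat) : nat :=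
  epsilon (inhabits 0%nat) (output_spec D L p used).

(* A generator only sees the current prefix, so it recomputes its earlier
   outputs from the shorter prefixes. *)
Fixpoint outputs (D : nat) (L : nat -> nat -> bool) (l : list nat) (n : nat) : list nat :=
  match n with
  | O => []
  | S k => outputs D L l k ++ [choose D L (firstn (S k) l) (outputs D L l k)]
  end.

Definition threshold (eps : R) : nat := epsilon (inhabits 0%nat) (fun D => 1 <= eps * INR D).

Definition consensus_generator : generator :=
  fun L eps l => last (outputs (threshold eps) L l (length l)) 0%nat.

Lemma threshold_spec eps : 0 < eps -> 1 <= eps * INR (threshold eps).
Proof.
  intros Heps. unfold threshold. apply epsilon_spec.
  destruct (nfloor_ex (/ eps)) as [n [_ Hn]]; [left; apply Rinv_0_lt_compat, Heps|].
  exists (S n). rewrite S_INR.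
  apply Rmult_lt_compat_l with (r := eps) in Hn; [|exact Heps].
  rewrite Rinv_r in Hn; lra.
Qed.

Lemma ex_fresh_least (C : nat -> Prop) (seen : list nat) :
  exists y, ~ In y seen /\ forall z, C z -> ~ In z seen -> C y /\ (y <= z)%nat.
Proof.
  destruct (classic (exists z, C z /\ ~ In z seen)) as [Hex|Hnone].
  - destruct (dec_inh_nat_subset_has_unique_least_element _ (fun z => classic _) Hex)
      as [y [[[Cy Fy] Hleast] _]].
    exists y. split; [exact Fy|]. intros z Cz Fz. split; [exact Cy|]. apply Hleast; auto.
  - exists (S (list_max seen)). split.
    + intros Hin. pose proof (proj1 (list_max_le seen _) (le_n _)) as Hmax.
      rewrite Forall_forall in Hmax. specialize (Hmax _ Hin). lia.
    + intros z Cz Fz. exfalso. eauto.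
Qed.

Lemma choose_spec D L p used : output_spec D L p used (choose D L p used).
Proof. unfold choose. apply epsilon_spec, ex_fresh_least. Qed.

Lemma prefix_length x n : length (prefix x n) = n.
Proof. unfold prefix. rewrite length_map, length_seq. reflexivity. Qed.

Lemma firstn_prefix x k n : (k <= n)%nat -> firstn k (prefix x n) = prefix x k.
Proof.
  intros Hkn. unfold prefix. rewrite firstn_map. f_equal.
  replace n with (k + (n - k))%nat by lia.
  rewrite seq_app, firstn_app, length_seq, Nat.sub_diag, firstn_O, app_nil_r.
  apply firstn_all2. rewrite length_seq. lia.
Qed.

Section Outputs.
Variables (L : nat -> nat -> bool) (eps : R) (x : nat -> nat).
Local Notation D := (threshold eps).
Local Notation W := (gen_output consensus_generator L eps x).

Lemma gen_output_unfold t :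
  W t = choose D L (prefix x (S t)) (outputs D L (prefix x (S t)) t).
Proof.
  unfold gen_output, consensus_generator. rewrite prefix_length. cbn [outputs].
  rewrite last_last, firstn_prefix; reflexivity.
Qed.

Lemma outputs_prefix k n : (k <= n)%nat -> outputs D L (prefix x n) k = map W (seq 0 k).
Proof.
  revert n. induction k as [|k IH]; intros n Hkn; [reflexivity|].
  cbn [outputs]. rewrite (IH n), firstn_prefix, seq_S, map_app by lia. simpl.
  rewrite gen_output_unfold, (IH (S k)) by lia. reflexivity.
Qed.

Lemma gen_output_choose t : W t = choose D L (prefix x (S t)) (map W (seq 0 t)).
Proof. rewrite gen_output_unfold, outputs_prefix by lia. reflexivity. Qed.

End Outputs.

Lemma consensus_generator_valid : valid_generator consensus_generator.
Proof.
  intros L eps x t.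
  destruct (choose_spec (threshold eps) L (prefix x (S t))
              (map (gen_output consensus_generator L eps x) (seq 0 t))) as [Hfresh _].
  rewrite <- gen_output_choose in Hfresh.
  split.
  - intros Hin. apply Hfresh, in_or_app. left. exact Hin.
  - intros s Hs Heq. apply Hfresh, in_or_app. right.
    rewrite <- Heq. apply in_map, in_seq. lia.
Qed.

Lemma valid_generator_inj G L eps x a b :
  valid_generator G -> gen_output G L eps x a = gen_output G L eps x b -> a = b.
Proof.
  intros HG Heq. destruct (Nat.lt_trichotomy a b) as [H|[H|H]]; auto; exfalso.
  - exact (proj2 (HG L eps x b) a H Heq).
  - exact (proj2 (HG L eps x a) b H (eq_sym Heq)).
Qed.

Definition density_zero (P : nat -> Prop) : Prop :=
  forall r, 0 < r -> exists N, forall n, (N <= n)%nat -> INR (cntP P n) <= r * INR n.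

Lemma density_zero_of_lim (P : nat -> Prop) :
  is_lim_seq (fun n => INR (cntP P n) / INR n) 0 -> density_zero P.
Proof.
  intros Hlim r Hr. apply is_lim_seq_spec in Hlim.
  destruct (Hlim (mkposreal r Hr)) as [N HN].
  exists (S N). intros n Hn. specialize (HN n ltac:(lia)). simpl in HN.
  assert (Hn0 : 0 < INR n) by (apply lt_0_INR; lia).
  rewrite Rminus_0_r in HN. apply Rabs_def2 in HN as [HN _].
  apply Rmult_lt_compat_r with (r := INR n) in HN; [|exact Hn0].
  unfold Rdiv in HN. rewrite Rmult_assoc, Rinv_l in HN; lra.
Qed.

Lemma density_zero_sub (P Q : nat -> Prop) :
  (forall j, P j -> Q j) -> density_zero Q -> density_zero P.
Proof.
  intros HPQ HQ r Hr. destruct (HQ r Hr) as [N HN]. exists N. intros n Hn.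
  eapply Rle_trans; [|exact (HN n Hn)].
  apply le_INR, cntP_le_mono. auto.
Qed.

Lemma Rbar_le_of_forall_lt (c : R) (l : Rbar) :
  (forall eta, 0 < eta -> Rbar_le (c - eta) l) -> Rbar_le c l.
Proof.
  intros H. destruct l as [l| |]; simpl in *; auto.
  - apply Rnot_lt_le. intros Hlt. specialize (H ((c - l) / 2)). simpl in H. lra.
  - exact (H 1 Rlt_0_1).
Qed.

Lemma ex_step_below (M : R) (N m : nat) :
  0 < M -> M * (INR N + 2) <= INR m ->
  exists T, (N <= T)%nat /\ M * INR (S T) <= INR m /\ INR m / M - 1 < INR (S T).
Proof.
  intros HM Hm.
  assert (HqN : INR N + 2 <= INR m / M) by (apply Rle_div_r; lra).
  destruct (nfloor_ex (INR m / M)) as [k [Hk1 Hk2]]; [pose proof (pos_INR N); lra|].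
  destruct k as [|T]; [simpl in Hk2; pose proof (pos_INR N); lra|].
  exists T. split; [|split].
  - apply INR_le. rewrite S_INR in Hk2. lra.
  - rewrite Rmult_comm. apply Rle_div_r; [exact HM|exact Hk1].
  - lra.
Qed.

Lemma LimInf_ratio_ge (u : nat -> R) (a M B : R) :
  0 < a -> 0 < M ->
  (forall r, 0 < r -> exists N, forall T m, (N <= T)%nat -> M * INR (S T) <= INR m ->
     (a - r) * INR (S T) - B <= u m) ->
  Rbar_le (a / M) (LimInf_seq (fun m => u m / INR m)).
Proof.
  intros Ha HM Hbound. apply Rbar_le_of_forall_lt. intros eta Heta.
  rewrite <- LimInf_seq_const. apply LimInf_le.
  (* [r <= a] keeps [a - r] nonnegative; [r <= eta M / 2] costs at most [eta / 2]. *)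
  set (r := Rmin a (eta * M / 2)).
  assert (Hr : 0 < r) by (apply Rmin_pos; nra).
  assert (Hra : r <= a) by apply Rmin_l.
  assert (HrM : r <= eta * M / 2) by apply Rmin_r.
  destruct (Hbound r Hr) as [N HN].
  assert (HB : 0 <= 2 * (a + Rabs B) / eta).
  { pose proof (Rabs_pos B). apply Rdiv_le_0_compat; lra. }
  assert (HMN : 0 <= M * (INR N + 2)) by (pose proof (pos_INR N); nra).
  destruct (nfloor_ex (M * (INR N + 2) + 2 * (a + Rabs B) / eta)) as [m0 [_ Hm0]]; [lra|].
  exists (S m0). intros m Hm. apply le_INR in Hm. rewrite S_INR in Hm.
  destruct (ex_step_below M N m HM ltac:(lra)) as [T [HNT [HTm HmT]]].
  specialize (HN T m HNT HTm).
  set (mm := INR m) in *. set (q := mm / M) in *.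
  assert (HqM : q * M = mm) by (unfold q; field; lra).
  assert (Hmm : 0 < mm) by lra.
  assert (H1 : (a - r) * (q - 1) <= (a - r) * INR (S T)) by (apply Rmult_le_compat_l; lra).
  assert (H2 : r * q <= eta * mm / 2).
  { replace (eta * mm / 2) with (eta * M / 2 * q) by (rewrite <- HqM; field).
    apply Rmult_le_compat_r; [apply Rdiv_le_0_compat|]; lra. }
  assert (H3 : a + B <= eta * mm / 2).
  { assert (Hlarge : 2 * (a + Rabs B) / eta * eta <= mm * eta)
      by (apply Rmult_le_compat_r; lra).
    replace (2 * (a + Rabs B) / eta * eta) with (2 * (a + Rabs B)) in Hlarge by (field; lra).
    pose proof (Rle_abs B). lra. }
  apply Rle_div_r; [exact Hmm|].
  replace ((a / M - eta) * mm) with (a * q - eta * mm) by (unfold q; field; lra).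
  nra.
Qed.

Section Mistakes.
Variables (D : nat) (L : nat -> nat -> bool) (x : nat -> nat).
Local Open Scope nat_scope.

Lemma mistakes_prefix i n : mistakes L (prefix x n) i = cntP (fun r => L i (x r) = false) n.
Proof.
  induction n as [|n IH]; [reflexivity|].
  unfold mistakes, prefix in *. rewrite seq_S, map_app, filter_app, length_app, IH. simpl.
  destruct (L i (x n)), excluded_middle_informative; simpl; congruence || lia.
Qed.

Lemma candidate_mistake_count i N :
  cntP (fun s => candidate D L (prefix x s) i /\ L i (x s) = false) N * (D * 2 ^ S i) <= N.
Proof.
  induction N as [|N IH]; cbn [cntP]; [lia|].
  destruct excluded_middle_informative as [[Hcand _]|_]; [|nia].
  unfold candidate in Hcand. rewrite mistakes_prefix, prefix_length, <- Nat.mul_assoc in Hcand.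
  assert (cntP (fun s => candidate D L (prefix x s) i /\ L i (x s) = false) N
          <= cntP (fun r => L i (x r) = false) N) by (apply cntP_le_mono; tauto).
  set (c := D * 2 ^ S i) in *. nia.
Qed.

Lemma miss_count N : cntP (fun s => ~ consensus D L (prefix x s) (x s)) N * D <= N.
Proof.
  set (E := fun i s => candidate D L (prefix x s) i /\ L i (x s) = false).
  assert (Hwitness : cntP (fun s => ~ consensus D L (prefix x s) (x s)) N
                     <= cntP (fun s => exists i, i < N /\ E i s) N).
  { apply cntP_le_mono. intros s Hs Hmiss.
    unfold consensus in Hmiss. rewrite prefix_length in Hmiss.
    apply not_all_ex_not in Hmiss as [i Hi].
    apply imply_to_and in Hi as [Hi Hi']. apply imply_to_and in Hi' as [Hcand HL].
    exists i. split; [lia|]. split; [exact Hcand|]. now apply Bool.not_true_iff_false. }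
  apply Nat.le_trans with (list_sum (map (fun i => cntP (E i) N) (seq 0 N)) * D).
  - apply Nat.mul_le_mono_r. etransitivity; [exact Hwitness|apply cntP_exists_le_sum].
  - apply dyadic_sum_le. intros i _. apply candidate_mistake_count.
Qed.

End Mistakes.

Section Density.
Variables (M eps : R) (L : nat -> nat -> bool) (K : nat -> bool) (x : nat -> nat).
Hypothesis M_ge1 : 1 <= M.
Hypothesis eps_range : 0 < eps < 1.
Hypothesis x_inj : forall s t, x s = x t -> s = t.
Hypothesis target : exists i, forall y, L i y = K y.
Hypothesis noise_sparse : density_zero (fun t => K (x t) = false).
Hypothesis displacement : bounded_displacement M x K.

Local Notation D := (threshold eps).
Local Notation W := (gen_output consensus_generator L eps x).
Local Notation hits := (fun j => exists t, W t = kth K j).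

Lemma consensus_eventually_in_target :
  exists n1, forall s, (n1 <= s)%nat -> forall y, consensus D L (prefix x s) y -> K y = true.
Proof.
  destruct target as [i Hi].
  set (c := (D * 2 ^ S i)%nat).
  assert (Hc : 0 < INR c).
  { apply lt_0_INR. pose proof (threshold_spec eps (proj1 eps_range)) as HD.
    pose proof (Nat.pow_nonzero 2 (S i) ltac:(lia)).
    destruct D; [simpl in HD; lra|]. unfold c. nia. }
  destruct (noise_sparse (/ (2 * INR c))) as [N HN]; [apply Rinv_0_lt_compat; lra|].
  exists (N + 2 * c + S i)%nat. intros s Hs y Hy.
  rewrite <- Hi. apply Hy; [rewrite prefix_length; lia|].
  unfold candidate. rewrite mistakes_prefix, prefix_length, <- Nat.mul_assoc. fold c.
  assert (Hmist : (cntP (fun r => L i (x r) = false) s <= cntP (fun r => K (x r) = false) s)%nat)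
    by (apply cntP_le_mono; intros r _; rewrite Hi; auto).
  apply le_INR in Hmist.
  specialize (HN s ltac:(lia)).
  apply Rmult_le_compat_r with (r := 2 * INR c) in HN; [|lra].
  replace (/ (2 * INR c) * INR s * (2 * INR c)) with (INR s) in HN by (field; lra).
  assert (Hs2 : INR (2 * c) <= INR s) by (apply le_INR; lia).
  rewrite mult_INR in Hs2. simpl (INR 2) in Hs2.
  apply INR_le. rewrite mult_INR, plus_INR. simpl (INR 1). nra.
Qed.

Section Steps.
Variable t0 : nat.
Hypothesis t0_in_target :
  forall s, (t0 <= s)%nat -> forall y, consensus D L (prefix x s) y -> K y = true.
Hypothesis t0_displacement :
  forall t, (t0 <= t)%nat -> INR (Defs.sigma (x t) K) <= M * INR (S t).

Let good_step t : Prop :=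
  (t0 <= t)%nat /\ K (x (S t)) = true /\ consensus D L (prefix x (S t)) (x (S t)).

Lemma good_step_rank m T t :
  M * INR (S T) <= INR m -> (t < T)%nat -> good_step t -> (cnt K (x (S t)) < m)%nat.
Proof.
  intros Hm Ht [Ht0 [HK _]].
  pose proof (t0_displacement (S t) ltac:(lia)) as Hd.
  unfold Defs.sigma in Hd. rewrite HK, !S_INR in Hd.
  assert (INR (S (S t)) <= INR (S T)) by (apply le_INR; lia).
  rewrite !S_INR in *. apply INR_lt. nra.
Qed.

Lemma repeated_good_count m T : M * INR (S T) <= INR m ->
  (cntP (fun t => good_step t /\ In (x (S t)) (map W (seq 0 t))) T <= cntP hits m)%nat.
Proof.
  intros Hm. apply cntP_le_inj with (f := fun t => cnt K (x (S t))).
  - intros t Ht [Hg Hin]. split; [exact (good_step_rank m T t Hm Ht Hg)|].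
    apply in_map_iff in Hin as [t' [Ht' _]].
    exists t'. rewrite kth_cnt; [exact Ht'|apply Hg].
  - intros a b _ _ [[_ [Ka _]] _] [[_ [Kb _]] _] Heq.
    apply cnt_inj in Heq; [|exact Ka|exact Kb]. apply x_inj in Heq. lia.
Qed.

Lemma fresh_good_output t : good_step t -> ~ In (x (S t)) (map W (seq 0 t)) ->
  K (W t) = true /\ (W t <= x (S t))%nat.
Proof.
  intros [Ht0 [_ Hcons]] Hnew.
  destruct (choose_spec D L (prefix x (S t)) (map W (seq 0 t))) as [_ Hleast].
  rewrite <- gen_output_choose in Hleast.
  destruct (Hleast (x (S t)) Hcons) as [HconsW Hle].
  - intros Hin. apply in_app_or in Hin as [Hin|Hin]; [|contradiction].
    unfold prefix in Hin. apply in_map_iff in Hin as [r [Hr Hr']].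
    apply in_seq in Hr'. apply x_inj in Hr. lia.
  - split; [apply (t0_in_target (S t)); [lia|exact HconsW]|exact Hle].
Qed.

Lemma fresh_good_count m T : M * INR (S T) <= INR m ->
  (cntP (fun t => good_step t /\ ~ In (x (S t)) (map W (seq 0 t))) T <= cntP hits m)%nat.
Proof.
  intros Hm. apply cntP_le_inj with (f := fun t => cnt K (W t)).
  - intros t Ht [Hg Hnew]. destruct (fresh_good_output t Hg Hnew) as [KW Hle]. split.
    + pose proof (cnt_le_mono K _ _ Hle). pose proof (good_step_rank m T t Hm Ht Hg). lia.
    + exists t. symmetry. apply kth_cnt, KW.
  - intros a b _ _ [Ha Hna] [Hb Hnb] Heq.
    apply cnt_inj in Heq;
      [|apply (fresh_good_output a Ha Hna)|apply (fresh_good_output b Hb Hnb)].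
    exact (valid_generator_inj _ _ _ _ _ _ consensus_generator_valid Heq).
Qed.

Lemma steps_count m T : M * INR (S T) <= INR m ->
  (T <= 2 * cntP hits m + t0 + cntP (fun s => K (x s) = false) (S T)
        + cntP (fun s => ~ consensus D L (prefix x s) (x s)) (S T))%nat.
Proof.
  intros Hm.
  set (miss := fun s => ~ consensus D L (prefix x s) (x s)).
  set (seen := fun t => In (x (S t)) (map W (seq 0 t))).
  assert (Hcover : (cntP (fun _ => True) T <= cntP (fun t =>
      (((t < t0)%nat \/ K (x (S t)) = false) \/ miss (S t)) \/
      ((good_step t /\ seen t) \/ (good_step t /\ ~ seen t))) T)%nat).
  { apply cntP_le_mono. intros t _ _.
    destruct (Nat.le_gt_cases t0 t) as [Hle|Hlt]; [|left; left; left; exact Hlt].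
    destruct (K (x (S t))) eqn:HK; [|left; left; right; reflexivity].
    destruct (classic (miss (S t))) as [Hmiss|Hcons]; [left; right; exact Hmiss|right].
    destruct (classic (seen t)); [left|right]; repeat split; auto; apply NNPP, Hcons. }
  rewrite cntP_true in Hcover.
  pose proof (cntP_or (fun t => ((t < t0)%nat \/ K (x (S t)) = false) \/ miss (S t))
                      (fun t => (good_step t /\ seen t) \/ (good_step t /\ ~ seen t)) T).
  pose proof (cntP_or (fun t => (t < t0)%nat \/ K (x (S t)) = false) (fun t => miss (S t)) T).
  pose proof (cntP_or (fun t => (t < t0)%nat) (fun t => K (x (S t)) = false) T).
  pose proof (cntP_or (fun t => good_step t /\ seen t) (fun t => good_step t /\ ~ seen t) T).
  pose proof (cntP_lt_le t0 T).
  pose proof (cntP_shift (fun s => K (x s) = false) T).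
  pose proof (cntP_shift miss T).
  pose proof (repeated_good_count m T Hm).
  pose proof (fresh_good_count m T Hm).
  unfold seen in *. cbv beta in *. lia.
Qed.

End Steps.

Lemma output_density :
  Rbar_le ((1 - eps) / (2 * M)) (mu_low (fun y => exists t, W t = y) K).
Proof.
  destruct consensus_eventually_in_target as [n1 Hn1].
  destruct displacement as [nstar Hnstar].
  set (t0 := Nat.max n1 nstar).
  assert (Hmiss : forall N,
             INR (cntP (fun s => ~ consensus D L (prefix x s) (x s)) N) <= eps * INR N).
  { intros N. pose proof (threshold_spec eps (proj1 eps_range)) as HD.
    pose proof (le_INR _ _ (miss_count D L x N)) as HN. rewrite mult_INR in HN.
    pose proof (pos_INR (cntP (fun s => ~ consensus D L (prefix x s) (x s)) N)). nra. }
  unfold mu_low. replace ((1 - eps) / (2 * M)) with ((1 - eps) / 2 / M) by (field; lra).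
  apply (LimInf_ratio_ge _ _ _ ((1 + INR t0) / 2)); [lra|lra|].
  intros r Hr. destruct (noise_sparse r Hr) as [N HN]. exists N. intros T m HT Hm.
  pose proof (steps_count t0 (fun s Hs => Hn1 s ltac:(lia))
                (fun t Ht => Hnstar t ltac:(lia)) m T Hm) as Hsteps.
  apply le_INR in Hsteps. rewrite !plus_INR, mult_INR in Hsteps.
  pose proof (HN (S T) ltac:(lia)). pose proof (Hmiss (S T)).
  replace (INR 2) with 2 in Hsteps by (simpl; lra).
  rewrite S_INR in *. pose proof (pos_INR T). nra.
Qed.

End Density.

Theorem theorem7p11 (M : R) (HM : 1 <= M) :
  exists G : generator, valid_generator G /\
    forall (L : nat -> nat -> bool) (K : nat -> bool) (eps : R) (x : nat -> nat),
      (forall i, infinite_set (L i)) ->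
      (exists i, forall y, L i y = K y) ->
      0 < eps < 1 ->
      noisy_enumeration x K ->
      bounded_displacement M x K ->
      Rbar_le (Finite ((1 - eps) / (2 * M)))
              (mu_low (fun y => exists t, gen_output G L eps x t = y) K).
Proof.
  exists consensus_generator. split; [exact consensus_generator_valid|].
  intros L K eps x _ target eps_range [x_inj [Khat [Khat_K [_ [_ noise]]]]] displacement.
  apply output_density; auto.
  apply (density_zero_sub _ (fun t => Khat (x t) = false)); [|exact (density_zero_of_lim _ noise)].
  intros t HK. destruct (Khat (x t)) eqn:E; [rewrite (Khat_K _ E) in HK|]; congruence.
Qed.
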